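(* Let $\varepsilon>0$ and $\lambda<0$. Then the equilibrium point $$e_{2\lambda}=\Big(\frac{a}{\lambda-a_1},\frac{b}{\lambda-a_2},\frac{c}{\lambda-a_3}\Big)$$ of the $\varepsilon$-revised system $$\dot{\mathbf x}=\mathbf x\times\mathbf m(\mathbf x)+\varepsilon[(\mathbf x\times\mathbf m(\mathbf x))\times\mathbf m(\mathbf x)]$$ is Lyapunov stable.
   Context: Fix constants $0<a_1<a_2<a_3$ and $a,b,c\in\mathbb R$. Set $\mathbf m(\mathbf x)=(a_1x^1+a,\ a_2x^2+b,\ a_3x^3+c)$; $\times$ is the cross product in $\mathbb R^3$. *)

From Stdlib Require Import Reals.
From Coquelicot Require Import Coquelicot.
Open Scope R_scope.

Definition vec3 := (R * R * R)%type.
Definition c1 (v : vec3) : R := fst (fst v).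
Definition c2 (v : vec3) : R := snd (fst v).
Definition c3 (v : vec3) : R := snd v.

Definition vadd (u v : vec3) : vec3 := (c1 u + c1 v, c2 u + c2 v, c3 u + c3 v).
Definition vsub (u v : vec3) : vec3 := (c1 u - c1 v, c2 u - c2 v, c3 u - c3 v).
Definition vscale (k : R) (v : vec3) : vec3 := (k * c1 v, k * c2 v, k * c3 v).

Definition cross (u v : vec3) : vec3 :=
  (c2 u * c3 v - c3 u * c2 v,
   c3 u * c1 v - c1 u * c3 v,
   c1 u * c2 v - c2 u * c1 v).

Definition norm3 (v : vec3) : R := sqrt (c1 v ^ 2 + c2 v ^ 2 + c3 v ^ 2).

Definition mvec (a1 a2 a3 a b c : R) (x : vec3) : vec3 :=
  (a1 * c1 x + a, a2 * c2 x + b, a3 * c3 x + c).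

Definition revised_field (a1 a2 a3 a b c eps : R) (x : vec3) : vec3 :=
  let m := mvec a1 a2 a3 a b c x in
  vadd (cross x m) (vscale eps (cross (cross x m) m)).

Definition is_solution_on (F : vec3 -> vec3) (x : R -> vec3) (T : R) : Prop :=
  (forall t, 0 < t < T ->
     is_derive (fun s => c1 (x s)) t (c1 (F (x t))) /\
     is_derive (fun s => c2 (x s)) t (c2 (F (x t))) /\
     is_derive (fun s => c3 (x s)) t (c3 (F (x t)))) /\
  filterlim (fun s => c1 (x s)) (at_right 0) (locally (c1 (x 0))) /\
  filterlim (fun s => c2 (x s)) (at_right 0) (locally (c2 (x 0))) /\
  filterlim (fun s => c3 (x s)) (at_right 0) (locally (c3 (x 0))).

Definition lyapunov_stable (F : vec3 -> vec3) (p : vec3) : Prop :=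
  forall e, 0 < e -> exists d, 0 < d /\
    forall (T : R) (x : R -> vec3), is_solution_on F x T ->
      norm3 (vsub (x 0) p) < d ->
      forall t, 0 <= t < T -> norm3 (vsub (x t) p) < e.

(* V(x) = sum_i (a_i - lam) (x_i - e_i)^2 is a Lyapunov function: with
   m = m(x), the relations a = (lam - a1) e_1, b = (lam - a2) e_2,
   c = (lam - a3) e_3 make the gradient of V/2 at x equal to m - lam x.
   This vector is orthogonal to x × m, and its product with
   (x × m) × m is lam |x × m|^2.  Hence dV/dt = 2 lam eps |x × m|^2 <= 0
   along solutions, and since V is comparable to the squared distance to
   e, solutions starting near e stay near e. *)

From Stdlib Require Import Reals Lra Psatz.
From Coquelicot Require Import Coquelicot.
(* Imported after Coquelicot, whose [c1] would otherwise shadow the coordinate. *)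
Open Scope R_scope.

Lemma nonincreasing_of_derive_nonpos (g dg : R -> R) (T : R) :
  (forall t, 0 < t < T -> is_derive g t (dg t)) ->
  (forall t, 0 < t < T -> dg t <= 0) ->
  forall s t, 0 < s -> s <= t -> t < T -> g t <= g s.
Proof.
intros Hd Hn s t hs hst htT.
destruct (MVT_gen g s t dg) as [r [Hr Heq]].
- intros y Hy; rewrite Rmin_left, Rmax_right in Hy by lra.
  apply Hd; lra.
- intros y Hy; rewrite Rmin_left, Rmax_right in Hy by lra.
  apply continuity_pt_filterlim, (ex_derive_continuous g).
  eexists; apply Hd; lra.
- rewrite Rmin_left, Rmax_right in Hr by lra.
  assert (dg r <= 0) by (apply Hn; lra).
  nra.
Qed.

Lemma le_right_limit (g : R -> R) (l t : R) :
  0 < t -> filterlim g (at_right 0) (locally l) ->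
  (forall s, 0 < s < t -> g t <= g s) -> g t <= l.
Proof.
intros ht Hl Hs.
assert (H := filterlim_le (F := at_right 0) (fun _ => g t) g (g t) l).
simpl in H; apply H; [| apply filterlim_const | exact Hl].
exists (mkposreal t ht); intros y Hy Hy0; apply Hs.
unfold ball in Hy; simpl in Hy; unfold AbsRing_ball, abs, minus, plus, opp in Hy; simpl in Hy.
apply Rabs_def2 in Hy; lra.
Qed.

Lemma derive_nonpos_le_initial (g dg : R -> R) (T : R) :
  (forall t, 0 < t < T -> is_derive g t (dg t)) ->
  (forall t, 0 < t < T -> dg t <= 0) ->
  filterlim g (at_right 0) (locally (g 0)) ->
  forall t, 0 <= t < T -> g t <= g 0.
Proof.
intros Hd Hn Hl t [ht0 htT].
destruct (Rle_lt_or_eq_dec 0 t ht0) as [ht | <-]; [| lra].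
apply (le_right_limit g); [exact ht | exact Hl |].
intros s hs; apply (nonincreasing_of_derive_nonpos g dg T Hd Hn); lra.
Qed.

Lemma norm3_lt_iff (v : vec3) (d : R) :
  0 < d -> norm3 v < d <-> c1 v ^ 2 + c2 v ^ 2 + c3 v ^ 2 < d ^ 2.
Proof.
intro hd; unfold norm3; rewrite <- (sqrt_pow2 d) at 1 by lra.
split; [apply sqrt_lt_0_alt |].
intro H; apply sqrt_lt_1_alt; split; [nra | exact H].
Qed.

Definition wdist2 (k e x : vec3) : R :=
  c1 k * (c1 x - c1 e) ^ 2 + c2 k * (c2 x - c2 e) ^ 2 + c3 k * (c3 x - c3 e) ^ 2.

Definition wdist2_deriv (k e x v : vec3) : R :=
  2 * (c1 k * (c1 x - c1 e) * c1 v + c2 k * (c2 x - c2 e) * c2 v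
       + c3 k * (c3 x - c3 e) * c3 v).

Lemma is_derive_scal_sqr_sub (u : R -> R) (t du k e : R) :
  is_derive u t du ->
  is_derive (fun s => k * (u s - e) ^ 2) t (2 * k * (u t - e) * du).
Proof.
intro H.
replace (2 * k * (u t - e) * du) with (du * (2 * k * (u t - e))) by ring.
apply (is_derive_comp (fun y => k * (y - e) ^ 2) u); [| exact H].
auto_derive; [exact I | ring].
Qed.

Lemma wdist2_derive_solution (F : vec3 -> vec3) (x : R -> vec3) (T : R) (k e : vec3) :
  is_solution_on F x T ->
  forall t, 0 < t < T ->
  is_derive (fun s => wdist2 k e (x s)) t (wdist2_deriv k e (x t) (F (x t))).
Proof.
intros [Hd _] t ht; destruct (Hd t ht) as [D1 [D2 D3]].
unfold wdist2, wdist2_deriv.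
rewrite !Rmult_plus_distr_l, <- !Rmult_assoc.
assert (Hplus : forall (f h : R -> R) df dh, is_derive f t df -> is_derive h t dh ->
  is_derive (fun s => f s + h s) t (df + dh)) by (intros; apply (is_derive_plus f h); assumption).
apply Hplus; [apply Hplus |]; apply is_derive_scal_sqr_sub; assumption.
Qed.

Lemma wdist2_right_cont_solution (F : vec3 -> vec3) (x : R -> vec3) (T : R) (k e : vec3) :
  is_solution_on F x T ->
  filterlim (fun s => wdist2 k e (x s)) (at_right 0) (locally (wdist2 k e (x 0))).
Proof.
intros [_ [L1 [L2 L3]]].
assert (Hsq : forall (u : R -> R) u0 ki ei,
  filterlim u (at_right 0) (locally u0) ->
  filterlim (fun s => ki * (u s - ei) ^ 2) (at_right 0) (locally (ki * (u0 - ei) ^ 2))).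
{ intros u u0 ki ei Hu.
  apply (filterlim_comp _ _ _ u (fun y => ki * (y - ei) ^ 2) _ (locally u0) _ Hu).
  apply (ex_derive_continuous (fun y => ki * (y - ei) ^ 2)); auto_derive; auto. }
assert (Hplus : forall (f h : R -> R) l1 l2,
  filterlim f (at_right 0) (locally l1) -> filterlim h (at_right 0) (locally l2) ->
  filterlim (fun s => f s + h s) (at_right 0) (locally (l1 + l2))).
{ intros f h l1 l2 Hf Hh; exact (filterlim_comp_2 f h Rplus Hf Hh (filterlim_plus l1 l2)). }
unfold wdist2; apply Hplus; [apply Hplus |]; apply Hsq; assumption.
Qed.

Lemma wdist2_bounds (k e x : vec3) (klo khi : R) :
  klo <= c1 k <= khi -> klo <= c2 k <= khi -> klo <= c3 k <= khi ->
  klo * (c1 (vsub x e) ^ 2 + c2 (vsub x e) ^ 2 + c3 (vsub x e) ^ 2) <= wdist2 k e x /\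
  wdist2 k e x <= khi * (c1 (vsub x e) ^ 2 + c2 (vsub x e) ^ 2 + c3 (vsub x e) ^ 2).
Proof.
intros H1 H2 H3.
destruct k as [[k1 k2] k3], e as [[e1 e2] e3], x as [[x1 x2] x3].
unfold wdist2, vsub, c1, c2, c3 in *; simpl in *.
pose proof (pow2_ge_0 (x1 - e1)); pose proof (pow2_ge_0 (x2 - e2));
pose proof (pow2_ge_0 (x3 - e3)).
split; nra.
Qed.

Lemma lyapunov_stable_of_wdist2 (F : vec3 -> vec3) (k e : vec3) (klo khi : R) :
  0 < klo ->
  klo <= c1 k <= khi -> klo <= c2 k <= khi -> klo <= c3 k <= khi ->
  (forall x, wdist2_deriv k e x (F x) <= 0) ->
  lyapunov_stable F e.
Proof.
intros hlo H1 H2 H3 Hneg ep hep.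
assert (hhi : 0 < khi) by lra.
exists (ep * klo / khi); split; [apply Rdiv_lt_0_compat; nra |].
intros T x Hsol H0 t Ht.
assert (Hmon : wdist2 k e (x t) <= wdist2 k e (x 0)).
{ apply (derive_nonpos_le_initial (fun s => wdist2 k e (x s))
           (fun s => wdist2_deriv k e (x s) (F (x s))) T);
    [exact (wdist2_derive_solution F x T k e Hsol) | intros; apply Hneg
    | exact (wdist2_right_cont_solution F x T k e Hsol) | exact Ht]. }
destruct (wdist2_bounds k e (x t) klo khi H1 H2 H3) as [Hlo _].
destruct (wdist2_bounds k e (x 0) klo khi H1 H2 H3) as [_ Hhi].
apply norm3_lt_iff in H0; [| apply Rdiv_lt_0_compat; nra].
apply norm3_lt_iff; [exact hep |].
set (St := _ + _ + _) in Hlo |- *; set (S0 := _ + _ + _) in Hhi, H0.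
assert (Hd2 : khi * (ep * klo / khi) ^ 2 = klo * (ep ^ 2 * (klo / khi))) by (field; lra).
assert (Hratio : klo / khi <= 1) by (apply (Rcomplements.Rdiv_le_1 klo khi hhi); lra).
assert (khi * S0 < khi * (ep * klo / khi) ^ 2) by (apply Rmult_lt_compat_l; lra).
assert (ep ^ 2 * (klo / khi) <= ep ^ 2) by (pose proof (pow2_ge_0 ep); nra).
assert (klo * St < klo * ep ^ 2) by nra.
apply (Rmult_lt_reg_l klo); lra.
Qed.

Section RevisedSystem.

Variables a1 a2 a3 a b c eps lam : R.
Variable e : vec3.
Hypothesis ha : a = (lam - a1) * c1 e.
Hypothesis hb : b = (lam - a2) * c2 e.
Hypothesis hc : c = (lam - a3) * c3 e.

Let weights : vec3 := (a1 - lam, a2 - lam, a3 - lam).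

Lemma revised_field_equilibrium : revised_field a1 a2 a3 a b c eps e = (0, 0, 0).
Proof.
destruct e as [[e1 e2] e3]; unfold c1, c2, c3 in ha, hb, hc; simpl in ha, hb, hc.
subst a b c; unfold revised_field, vadd, vscale, cross, mvec, c1, c2, c3; simpl.
f_equal; [f_equal |]; ring.
Qed.

Lemma wdist2_deriv_revised_field (x : vec3) :
  let w := cross x (mvec a1 a2 a3 a b c x) in
  wdist2_deriv weights e x (revised_field a1 a2 a3 a b c eps x)
  = 2 * lam * eps * (c1 w ^ 2 + c2 w ^ 2 + c3 w ^ 2).
Proof.
destruct e as [[e1 e2] e3]; unfold c1, c2, c3 in ha, hb, hc; simpl in ha, hb, hc.
subst a b c; destruct x as [[x1 x2] x3].
unfold weights, wdist2_deriv, revised_field, vadd, vscale, cross, mvec, c1, c2, c3; simpl.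
ring.
Qed.

Lemma revised_field_lyapunov_stable :
  lam < a1 -> a1 <= a2 -> a2 <= a3 -> 0 <= eps -> lam <= 0 ->
  lyapunov_stable (revised_field a1 a2 a3 a b c eps) e.
Proof.
intros h1 h12 h23 heps hlam.
apply (lyapunov_stable_of_wdist2 _ weights e (a1 - lam) (a3 - lam));
  unfold weights, c1, c2, c3; simpl; try lra.
intro x; rewrite wdist2_deriv_revised_field.
set (w := cross x _).
pose proof (pow2_ge_0 (c1 w)); pose proof (pow2_ge_0 (c2 w)); pose proof (pow2_ge_0 (c3 w)).
assert (lam * eps <= 0) by nra.
nra.
Qed.

End RevisedSystem.

Theorem theorem6p5 (a1 a2 a3 a b c eps lam : R)
  (h1 : 0 < a1) (h12 : a1 < a2) (h23 : a2 < a3)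
  (heps : 0 < eps) (hlam : lam < 0) :
  let e2 : vec3 := (a / (lam - a1), b / (lam - a2), c / (lam - a3)) in
  revised_field a1 a2 a3 a b c eps e2 = (0, 0, 0) /\
  lyapunov_stable (revised_field a1 a2 a3 a b c eps) e2.
Proof.
intro e2.
assert (ha : a = (lam - a1) * c1 e2) by (unfold e2, c1; simpl; field; lra).
assert (hb : b = (lam - a2) * c2 e2) by (unfold e2, c2; simpl; field; lra).
assert (hc : c = (lam - a3) * c3 e2) by (unfold e2, c3; simpl; field; lra).
split.
- exact (revised_field_equilibrium a1 a2 a3 a b c eps lam e2 ha hb hc).
- apply (revised_field_lyapunov_stable a1 a2 a3 a b c eps lam e2 ha hb hc); lra.
Qed.
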